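(* Let $X,Y$ be normed spaces over $K$ and $M>0$. The set $B^M(X,Y)$ of all topology bounded $M$-contraction operators from $X$ into $Y$ is a subset of $B(X,Y)$ and is closed in the normed space $(B(X,Y),\|\cdot\|_{B(X,Y)})$.
   Context: $K$ is $\mathbb{R}$ or $\mathbb{C}$; normed spaces are nontrivial; operators are arbitrary maps. $\|F\|_{B(X,Y)}=\max\left(\sup_{x\neq 0,x\in X}\frac{\|F(x)\|_Y}{\|x\|_X},\ \|F(0)\|_Y\right)$ and $B(X,Y)$ is the set of maps $F:X\to Y$ for which this is finite; it is a normed space under pointwise operations with norm $\|\cdot\|_{B(X,Y)}$. A map $F$ is topology bounded if it maps bounded sets of $X$ to bounded sets of $Y$. $F$ is an $M$-contraction operator if $\|F(kx)\|_Y\le M|k|\,\|F(x)\|_Y$ for every scalar $k\neq0$ and every $x\neq 0$. *)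

From HB Require Import structures.
From mathcomp Require Import all_boot all_order all_algebra.
From mathcomp Require Import all_classical all_reals all_analysis.
Set Implicit Arguments. Unset Strict Implicit. Unset Printing Implicit Defensive.
Import Order.TTheory GRing.Theory Num.Theory.
Import numFieldNormedType.Exports.
Local Open Scope classical_set_scope.
Local Open Scope ring_scope.

Section BDefs.
Context {K : numFieldType} {X Y : normedModType K}.

(** ||F||_{B(X,Y)} <= c, i.e. max(sup_{x<>0} ||F x||/||x||, ||F 0||) <= c *)
Definition Bnorm_le (F : X -> Y) (c : K) : Prop :=
  (forall x : X, x != 0 -> `|F x| / `|x| <= c) /\ `|F 0| <= c.

Definition inB (F : X -> Y) : Prop := exists c : K, Bnorm_le F c.

Definition topology_bounded (F : X -> Y) : Prop :=
  forall A : set X, [bounded x | x in A] -> [bounded y | y in F @` A].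

Definition M_contraction (M : K) (F : X -> Y) : Prop :=
  forall (k : K) (x : X), k != 0 -> x != 0 ->
    `|F (k *: x)| <= M * `|k| * `|F x|.

Definition BM (M : K) : set (X -> Y) :=
  [set F | topology_bounded F /\ M_contraction M F].

Definition closed_in_B (S : set (X -> Y)) : Prop :=
  forall F : X -> Y, inB F ->
    (forall e : K, 0 < e -> exists2 G, S G & Bnorm_le (F - G) e) -> S F.

End BDefs.

From HB Require Import structures.
From mathcomp Require Import all_boot all_order all_algebra.
From mathcomp Require Import all_classical all_reals all_analysis.
From mathcomp Require Import ring.
Import Order.TTheory GRing.Theory Num.Theory.
Import numFieldNormedType.Exports.
Local Open Scope classical_set_scope.
Local Open Scope ring_scope.

(* An M-contraction F is controlled by its values on the unit sphere:
   F x = F (|x| u) has norm at most M |x| |F u|, so a bound C on the image of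
   the unit ball gives the B(X,Y)-norm bound M C + C.  Conversely, an operator
   of B(X,Y)-norm at most c maps the ball of radius r into the ball of radius
   c r + c.  Finally, if ||F - G|| <= d with G an M-contraction, the
   contraction inequality holds for F up to an error d (M + 1) |k| |x|, which
   vanishes as d -> 0: B^M(X,Y) is closed. *)

Section BoundedSets.
Context {K : numFieldType} {V : normedModType K}.

Lemma bounded_set_normP (B : set V) :
  [bounded v | v in B] <-> exists2 C, 0 <= C & forall v, B v -> `|v| <= C.
Proof.
split.
  by move=> /pinfty_ex_gt0 [C C0 HC]; exists C => //; exact: ltW.
move=> [C C0 HC]; apply: filterS (nbhs_pinfty_ge (ger0_real C0)) => r Cr v Bv.
exact: le_trans (HC _ Bv) Cr.
Qed.

Lemma ler_norm_dist {u v : V} {e : K} : `|u - v| <= e -> `|u| <= `|v| + e.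
Proof. by move=> uve; rewrite -lerBlDl; exact: le_trans (lerB_dist u v) uve. Qed.

End BoundedSets.

Section OperatorNorm.
Context {K : numFieldType} {X Y : normedModType K}.
Implicit Types (F G : X -> Y) (c d M : K).

Lemma Bnorm_le_ge0 {F c} : Bnorm_le F c -> 0 <= c.
Proof. by move=> [_ F0c]; exact: le_trans (normr_ge0 _) F0c. Qed.

Lemma Bnorm_le_norm {F c} {x : X} : Bnorm_le F c -> x != 0 -> `|F x| <= c * `|x|.
Proof. by move=> [Fc _] x0; rewrite -ler_pdivrMr ?normr_gt0 //; exact: Fc. Qed.

Lemma Bnorm_le_normD {F c} (x : X) : Bnorm_le F c -> `|F x| <= c * `|x| + c.
Proof.
move=> Fc; have c0 := Bnorm_le_ge0 Fc.
have [->|x0] := eqVneq x 0.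
  by rewrite normr0 mulr0 add0r; case: Fc.
by apply: le_trans (Bnorm_le_norm Fc x0) _; rewrite lerDl.
Qed.

Lemma inB_topology_bounded {F} : inB F -> topology_bounded F.
Proof.
move=> [c Fc] A /bounded_set_normP [r r0 Ar]; apply/bounded_set_normP.
have c0 := Bnorm_le_ge0 Fc.
exists (c * r + c); first by rewrite addr_ge0 ?mulr_ge0.
move=> _ [x Ax <-]; apply: le_trans (Bnorm_le_normD x Fc) _.
by rewrite lerD2r; apply: ler_wpM2l => //; exact: Ar.
Qed.

Lemma M_contraction_inB {M F} :
  0 <= M -> topology_bounded F -> M_contraction M F -> inB F.
Proof.
move=> M0 Fb Fctr.
have /Fb /bounded_set_normP [C C0 FC] :
    [bounded x | x in [set x : X | `|x| <= 1]].
  by apply/bounded_set_normP; exists 1.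
exists (M * C + C); split; last first.
  by rewrite ler_wpDl ?mulr_ge0 // FC //; exists 0; rewrite //= normr0.
move=> x x0; have nx : 0 < `|x| by rewrite normr_gt0.
set u := `|x|^-1 *: x.
have u1 : `|u| = 1 by rewrite normfZV.
have u0 : u != 0 by rewrite -normr_eq0 u1 oner_neq0.
have xu : `|x| *: u = x by rewrite scalerA divff ?gt_eqF // scale1r.
rewrite ler_pdivrMr //; apply: le_trans (_ : M * C * `|x| <= _); last first.
  by rewrite ler_pM2r // lerDl.
have := Fctr `|x| u (lt0r_neq0 nx) u0; rewrite xu normr_id => /le_trans; apply.
rewrite mulrAC ler_pM2r //; apply: ler_wpM2l => //.
by apply: FC; exists u; rewrite //= u1.
Qed.

Lemma M_contraction_approx {M d F G} {k : K} {x : X} :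
    0 <= M -> M_contraction M G -> Bnorm_le (F - G) d -> k != 0 -> x != 0 ->
  `|F (k *: x)| <= M * `|k| * `|F x| + d * ((M + 1) * (`|k| * `|x|)).
Proof.
move=> M0 Gctr FGd k0 x0.
have kx0 : k *: x != 0 by rewrite scaler_eq0 negb_or k0 x0.
have FGkx : `|F (k *: x)| <= `|G (k *: x)| + d * (`|k| * `|x|).
  by apply: ler_norm_dist; have := Bnorm_le_norm FGd kx0; rewrite normrZ.
have GFx : `|G x| <= `|F x| + d * `|x|.
  by apply: ler_norm_dist; have := Bnorm_le_norm FGd x0; rewrite /= distrC.
have GkxFx : `|G (k *: x)| <= M * `|k| * (`|F x| + d * `|x|).
  by apply: le_trans (Gctr k x k0 x0) (ler_wpM2l _ GFx); rewrite mulr_ge0.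
apply: le_trans FGkx _; apply: le_trans (lerD GkxFx (lexx _)) _.
by rewrite le_eqVlt; apply/orP; left; apply/eqP; ring.
Qed.

Lemma M_contraction_closed {M F} :
    0 <= M ->
    (forall e, 0 < e -> exists2 G, M_contraction M G & Bnorm_le (F - G) e) ->
  M_contraction M F.
Proof.
move=> M0 approx k x k0 x0.
have D0 : 0 < (M + 1) * (`|k| * `|x|).
  by rewrite !mulr_gt0 ?normr_gt0 // ltr_wpDl.
apply/ler_addgt0Pr => e e0.
have [G Gctr FGe] := approx _ (divr_gt0 e0 D0).
by have := M_contraction_approx M0 Gctr FGe k0 x0; rewrite divfK ?gt_eqF.
Qed.
End OperatorNorm.

Theorem theorem2 (K : numFieldType) (X Y : normedModType K)
  (ntX : exists x : X, x != 0) (ntY : exists y : Y, y != 0)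
  (M : K) (M_gt0 : 0 < M) :
  (forall F : X -> Y, BM M F -> inB F) /\ closed_in_B (@BM K X Y M).
Proof.
have M0 := ltW M_gt0; split.
  by move=> F [Fb Fctr]; exact: M_contraction_inB M0 Fb Fctr.
move=> F FB approx; split; first exact: inB_topology_bounded.
apply: M_contraction_closed M0 _ => e e0.
by have [G [_ Gctr] FGe] := approx e e0; exists G.
Qed.
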